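(* $\mathcal{L}_{\mathsf{DSAFA}}\subsetneq\mathcal{L}_{\mathsf{SAFA}}$, where $\mathcal{L}_{\mathsf{DSAFA}}$ and $\mathcal{L}_{\mathsf{SAFA}}$ are the classes of data languages accepted by deterministic SAFA and by (nondeterministic) SAFA respectively.
   Context: $D$ is a fixed countably infinite set of data values; for a finite alphabet $\Sigma$, data languages are subsets of $(\Sigma\times D)^*$. A set augmented finite automaton (SAFA) is a tuple $M=(Q,\Sigma\times D,q_0,F,H,\delta)$: $Q$ finite set of states, $q_0\in Q$ initial, $F\subseteq Q$ final, $H=\{h_1,\dots,h_m\}$ a finite collection of (names of) sets of data values, $\delta\subseteq Q\times\Sigma\times C\times OP\times Q$ with $C=\{p(h_i),\,!p(h_i): h_i\in H\}$, $OP=\{-\}\cup\{\mathsf{ins}(h_i):h_i\in H\}$. Configurations are $(q,\langle S_1,\dots,S_m\rangle)$ with $S_i\subseteq D$ finite; initially state $q_0$ and all sets empty. On reading $(a,d)$, a transition $(q,a,\alpha,op,q')$ from the current state may be taken if $\alpha=p(h_i)$ and $d\in S_i$, or $\alpha=\,!p(h_i)$ and $d\notin S_i$; then the state becomes $q'$ and if $op=\mathsf{ins}(h_j)$ the value $d$ is added to $S_j$ ($op=-$ changes nothing). A word is accepted if some run reads it entirely and ends in $F$. A SAFA is deterministic (DSAFA) if for every $q\in Q$ and $a\in\Sigma$, all transitions from $q$ on $a$ test the same set $h_i$, with at most one transition having condition $p(h_i)$ and at most one having condition $!p(h_i)$. *)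

From mathcomp Require Import all_boot.
Set Implicit Arguments. Unset Strict Implicit. Unset Printing Implicit Defensive.

(* The fixed countably infinite set of data values D is taken to be nat. *)
Definition data := nat.

Inductive cond (m : nat) : Type :=
| Pin  of 'I_m    (* p(h_i)  : d \in S_i    *)
| Pout of 'I_m.   (* !p(h_i) : d \notin S_i *)

Definition cond_set m (c : cond m) : 'I_m :=
  match c with Pin i => i | Pout i => i end.

(* Operations: None = "-", Some j = ins(h_j). *)
Definition op (m : nat) := option 'I_m.

Record safa (Sigma : finType) := Safa {
  st : finType;
  nsets : nat;
  q0 : st;
  final : pred st;
  delta : st -> Sigma -> cond nsets -> op nsets -> st -> bool
}.
Arguments st {Sigma} s.
Arguments nsets {Sigma} s.
Arguments q0 {Sigma} s.
Arguments final {Sigma} s _.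
Arguments delta {Sigma} s _ _ _ _ _.

(* Contents of the sets: S_i is represented by its membership predicate
   (finite, since built from the empty set by finitely many insertions). *)
Definition sets (m : nat) := 'I_m -> data -> bool.

Definition empty_sets m : sets m := fun _ _ => false.

Definition test m (c : cond m) (S : sets m) (d : data) : bool :=
  match c with Pin i => S i d | Pout i => ~~ S i d end.

Definition apply_op m (o : op m) (d : data) (S : sets m) : sets m :=
  match o with
  | None => S
  | Some j => fun i x => if i == j then (x == d) || S i x else S i x
  end.

Fixpoint runs Sigma (M : safa Sigma) (q : st M) (S : sets (nsets M))
    (w : seq (Sigma * data)) : Prop :=
  match w with
  | [::] => final M q
  | (a, d) :: w' =>
      exists (c : cond (nsets M)) (o : op (nsets M)) (q' : st M),
        delta M q a c o q' /\ test c S d /\ @runs Sigma M q' (apply_op o d S) w'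
  end.

Definition accepts Sigma (M : safa Sigma) (w : seq (Sigma * data)) : Prop :=
  @runs Sigma M (q0 M) (@empty_sets (nsets M)) w.

Definition deterministic Sigma (M : safa Sigma) : Prop :=
  forall (q : st M) (a : Sigma) c1 o1 q1 c2 o2 q2,
    delta M q a c1 o1 q1 -> delta M q a c2 o2 q2 ->
    cond_set c1 = cond_set c2 /\ (c1 = c2 -> o1 = o2 /\ q1 = q2).

Definition data_language (Sigma : finType) := seq (Sigma * data) -> Prop.

Definition SAFA_language Sigma (L : data_language Sigma) : Prop :=
  exists M : safa Sigma, forall w, L w <-> accepts M w.

Definition DSAFA_language Sigma (L : data_language Sigma) : Prop :=
  exists M : safa Sigma, deterministic M /\ forall w, L w <-> accepts M w.

From mathcomp Require Import all_boot.
From Stdlib Require Import Setoid.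

Set Implicit Arguments.
Unset Strict Implicit.
Unset Printing Implicit Defensive.

(* A nondeterministic SAFA accepts the words whose last two data values are
   equal: it guesses the second-to-last position, stores its datum in a set
   and checks the last datum against it.  Suppose a deterministic SAFA with
   m sets accepted this language, and feed it the distinct data 0, 1, ..., m.
   After reading 0, ..., n the next letter must be accepted exactly when its
   datum is n.  A negative test !p(h_i) would also be passed by the fresh
   datum n+1, so the test is p(h_i) for some set h_i which contains n but
   none of 0, ..., n-1.  Hence n is the least element of h_i, and this stays
   true once m is read since later insertions only add larger data.  Distinct
   n in 0..m thus give distinct sets: m+1 values among m sets. *)

Lemma test_inj m (c1 c2 : cond m) (S : sets m) (d : data) :
  cond_set c1 = cond_set c2 -> test c1 S d -> test c2 S d -> c1 = c2.
Proof. by case: c1 c2 => i [] j /= <- // => [-> | /negbTE ->]. Qed.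

Section Reachability.
Variables (Sigma : finType) (M : safa Sigma).

Fixpoint reaches (q : st M) (S : sets (nsets M)) (w : seq (Sigma * data))
    (q' : st M) (S' : sets (nsets M)) : Prop :=
  match w with
  | [::] => q = q' /\ S = S'
  | (a, d) :: w' =>
      exists c o q1, [/\ delta M q a c o q1, test c S d &
                         reaches q1 (apply_op o d S) w' q' S']
  end.

Lemma runs_cat q S u v :
  runs q S (u ++ v) <-> exists q' S', reaches q S u q' S' /\ runs q' S' v.
Proof.
elim: u q S => [|[a d] u IHu] q S /=.
  by split=> [Hv|[q' [S' [[-> ->] //]]]]; exists q, S.
split=> [[c [o [q1 [Hq1 [Hd Huv]]]]]|[q' [S' [[c [o [q1 [Hq1 Hd Hu]]]] Hv]]]].
  have [q' [S' [Hu Hv]]] := proj1 (IHu _ _) Huv.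
  by exists q', S'; split=> //; exists c, o, q1.
by exists c, o, q1; do 2!split=> //; apply/IHu; exists q', S'.
Qed.

Lemma reaches_cat q S u v q2 S2 : reaches q S (u ++ v) q2 S2 ->
  exists q1 S1, reaches q S u q1 S1 /\ reaches q1 S1 v q2 S2.
Proof.
elim: u q S => [|[a d] u IHu] q S /=; first by exists q, S.
move=> [c [o [q1 [Hq1 Hd /IHu [q3 [S3 [Hu Hv]]]]]]].
by exists q3, S3; split=> //; exists c, o, q1.
Qed.

Lemma reaches_det q S u q1 S1 q2 S2 : deterministic M ->
  reaches q S u q1 S1 -> reaches q S u q2 S2 -> q1 = q2 /\ S1 = S2.
Proof.
move=> detM; elim: u q S => [|[a d] u IHu] q S /=; first by move=> [<- <-] [<- <-].
move=> [c1 [o1 [q1' [Hq1 Hd1 Hu1]]]] [c2 [o2 [q2' [Hq2 Hd2 Hu2]]]].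
have [same_set same_step] := detM _ _ _ _ _ _ _ _ Hq1 Hq2.
have same_cond := test_inj same_set Hd1 Hd2; subst c2.
have [same_op same_state] := same_step erefl; subst o2 q2'.
exact: IHu Hu1 Hu2.
Qed.

Lemma reaches_fresh q S u q' S' i x : reaches q S u q' S' ->
  x \notin [seq p.2 | p <- u] -> S' i x = S i x.
Proof.
elim: u q S => [|[a d] u IHu] q S /=; first by move=> [_ ->].
move=> [c [o [q1 [_ _ Hu]]]]; rewrite in_cons negb_or => /andP[/negbTE xd xu].
rewrite (IHu _ _ Hu xu) {Hu}.
by case: o => [j|] //=; rewrite xd if_same.
Qed.

End Reachability.

Definition least_mem (A : pred nat) (v : nat) : Prop :=
  A v /\ forall k, k < v -> ~~ A k.

Lemma least_mem_unique A u v : least_mem A u -> least_mem A v -> u = v.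
Proof.
move=> [Au minu] [Av minv].
case: (ltngtP u v) => // [/minv | /minu]; first by rewrite Au.
by rewrite Av.
Qed.

Lemma eq_least_mem (A B : pred nat) v :
  (forall k, k <= v -> A k = B k) -> least_mem A v -> least_mem B v.
Proof.
move=> eqAB [Av minv]; split=> [|k ltkv]; first by rewrite -eqAB.
by rewrite -eqAB ?minv // ltnW.
Qed.

Lemma least_mem_card m k (A : 'I_m -> pred nat) :
  (forall v : 'I_k, exists i, least_mem (A i) v) -> k <= m.
Proof.
move=> /fin_all_exists [f fP].
have f_inj : injective f.
  by move=> u v fuv; apply/val_inj/(least_mem_unique (fP u)); rewrite fuv.
by have := leq_card f f_inj; rewrite !card_ord.
Qed.

Definition last_two_equal : data_language unit :=
  fun w => exists u d, w = u ++ [:: (tt, d); (tt, d)].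

Lemma last_two_equal_rcons u x y :
  last_two_equal (rcons (rcons u x) y) <-> x = y.
Proof.
split=> [[u' [d]]|<-].
  by rewrite -cat_rcons cats1 => /rcons_inj[/rcons_inj[_ <-] <-].
by case: x => [[] d]; exists u, d; rewrite -!cats1 -catA.
Qed.

Lemma last_two_equal_cons x w :
  last_two_equal (x :: w) <-> last_two_equal w \/ w = [:: x].
Proof.
split=> [[[|y u] [d /= [-> ->]]]|[[u [d ->]]|->]].
- by right.
- by left; exists u, d.
- by exists (x :: u), d.
- by case: x => [[] d]; exists [::], d.
Qed.

Definition word_iota (n : nat) : seq (unit * data) := [seq (tt, k) | k <- iota 0 n].

Lemma word_iotaS n : word_iota n.+1 = rcons (word_iota n) (tt, n).
Proof. by rewrite /word_iota -addn1 iotaD map_cat cats1. Qed.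

Lemma word_iotaD m n :
  word_iota (m + n) = word_iota m ++ [seq (tt, k) | k <- iota m n].
Proof. by rewrite /word_iota iotaD map_cat. Qed.

Lemma data_word_iota n : [seq p.2 | p <- word_iota n] = iota 0 n.
Proof. by rewrite -map_comp map_id. Qed.

Definition scanning : 'I_3 := ord0.
Definition stored : 'I_3 := Ordinal (isT : 1 < 3).
Definition accepting : 'I_3 := Ordinal (isT : 2 < 3).

Definition guess_delta (q : 'I_3) (_ : unit) (c : cond 1) (o : op 1) (q' : 'I_3) :=
  match c, o with
  | Pout _, None => (q == scanning) && (q' == scanning)
  | Pout _, Some _ => (q == scanning) && (q' == stored)
  | Pin _, None => (q == stored) && (q' == accepting)
  | Pin _, Some _ => false
  end.

Definition guess_safa : safa unit :=
  @Safa unit 'I_3 1 scanning (pred1 accepting) guess_delta.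

Lemma guess_runs_accepting S w : @runs _ guess_safa accepting S w -> w = [::].
Proof. by case: w => [|[a d] w] //= [[] i [[j|] [q' []]]]. Qed.

Lemma guess_runs_stored S w : @runs _ guess_safa stored S w ->
  exists d, w = [:: (tt, d)] /\ S ord0 d.
Proof.
case: w => [|[[] d] w] //= [[] i [[j|] [q' [/= Hq]]]] //.
move: Hq => /eqP-> [Sd /guess_runs_accepting->].
by rewrite (ord1 i) in Sd; exists d.
Qed.

Lemma guess_safa_lang w : last_two_equal w <-> accepts guess_safa w.
Proof.
rewrite /accepts; elim: w => [|[[] d] w IHw].
  by split=> [[[|y u] [d]]|].
rewrite last_two_equal_cons IHw; split=> [[Hw|->]|].
- by exists (Pout ord0), None, scanning.
- exists (Pout ord0), (Some ord0), stored; do 2!split=> //=.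
  by exists (Pin ord0), None, accepting; rewrite /= !eqxx.
case=> [[] i [[j|] [q' [/= /eqP q'E [_ Hw]]]]] //; subst q'; last by left.
move: Hw => /guess_runs_stored [d' [-> /=]].
by rewrite (ord1 j) eqxx orbF => /eqP ->; right.
Qed.

Section NoDeterministicSAFA.
Variable M : safa unit.
Hypotheses (M_det : deterministic M)
           (M_lang : forall w, last_two_equal w <-> accepts M w).

Lemma accepts_word_iota_next n :
  exists q S, reaches (q0 M) (@empty_sets _) (word_iota n.+1) q S /\
              runs q S [:: (tt, n)].
Proof.
apply/runs_cat/(M_lang (word_iota n.+1 ++ [:: (tt, n)])).
by rewrite cats1 word_iotaS; apply/last_two_equal_rcons.
Qed.

Lemma least_mem_after_word_iota n q S :
  reaches (q0 M) (@empty_sets _) (word_iota n.+1) q S ->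
  exists i, least_mem (S i) n.
Proof.
move=> reach_qS; have [q' [S' [reach_qS' run_n]]] := accepts_word_iota_next n.
have [eq_q eq_S] := reaches_det M_det reach_qS reach_qS'; subst q S.
have rejects k : k != n -> ~ runs q' S' [:: (tt, k)].
  move=> neq_kn run_k; move/eqP: neq_kn; apply.
  have : accepts M (word_iota n.+1 ++ [:: (tt, k)]) by apply/runs_cat; exists q', S'.
  move/(M_lang (word_iota n.+1 ++ _)); rewrite cats1 word_iotaS.
  by move=> /last_two_equal_rcons [].
case: run_n => [[] i [o [q1 [Hq1 [Hn Hfinal]]]]].
- exists i; split=> // k ltkn; apply/negP => Sk.
  by apply: (rejects k); [rewrite ltn_eqF | exists (Pin i), o, q1].
- have fresh : ~~ S' i n.+1.
    by rewrite (reaches_fresh _ reach_qS') // data_word_iota mem_iota ltnn.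
  by case: (rejects n.+1); [rewrite eqn_leq ltnn | exists (Pout i), o, q1].
Qed.

Lemma nsets_gt k : k < nsets M.
Proof.
have [q [S [reach_qS _]]] := accepts_word_iota_next k.
apply: (least_mem_card (A := S)) => v.
have [q' [S' [reach_qS' reach_rest]]] : exists q' S',
    reaches (q0 M) (@empty_sets _) (word_iota v.+1) q' S' /\
    reaches q' S' [seq (tt, x) | x <- iota v.+1 (k - v)] q S.
  by apply: reaches_cat; rewrite -word_iotaD addSn subnKC // -ltnS.
have [i least_i] := least_mem_after_word_iota reach_qS'.
exists i; apply: eq_least_mem least_i => x le_xv.
apply/esym/(reaches_fresh _ reach_rest).
by rewrite -map_comp map_id mem_iota ltnNge ltnS le_xv.
Qed.

End NoDeterministicSAFA.

Theorem theorem13 :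
  (forall (Sigma : finType) (L : data_language Sigma),
      DSAFA_language L -> SAFA_language L) /\
  (exists (Sigma : finType) (L : data_language Sigma),
      SAFA_language L /\ ~ DSAFA_language L).
Proof.
split; first by move=> Sigma L [M [_ M_lang]]; exists M.
exists unit, last_two_equal; split.
  by exists guess_safa; exact: guess_safa_lang.
move=> [M [M_det M_lang]].
by have := nsets_gt M_det M_lang (nsets M); rewrite ltnn.
Qed.
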